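(* Let $f$ be a strongly hyperbolic function, $b>0$ and $s,t\neq0$. Then: (1) $\lim_{x\to\infty}\frac{f'(x)}{f'(x+b)}=1$; (2) $\lim_{x\to+\infty}\frac{f'(x)}{f(x)}=0$; (3) $\lim_{x\to+\infty}\frac{f(x+s)-f(x)}{f'(x)}=s$; (4) $\lim_{x\to+\infty}\frac{f(x+s)-f(x)}{f(x+t)-f(x)}=\frac{s}{t}$; (5) $\liminf_{x\to0+}\frac{f'(x)}{f(x)}=-\infty$.
   Context: $\mathbb{R}^+=(0,\infty)$. A function $f:\mathbb{R}^+\to\mathbb{R}^+$ is strongly hyperbolic if: (1) $\lim_{x\to0+}f(x)=+\infty$ and $\lim_{x\to+\infty}f(x)=0$; (2) $f$ is strictly convex; (3) for each $b\in\mathbb{R}$, $\lim_{x\to+\infty}f(x+b)/f(x)=1$; (4) $f$ is differentiable; (5) $x\mapsto\ln|f'(x)|$ is strictly convex. *)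

From Stdlib Require Import Reals.
From Coquelicot Require Import Coquelicot.
Open Scope R_scope.

Definition strictly_convex_pos (g : R -> R) : Prop :=
  forall x y l : R, 0 < x -> 0 < y -> x <> y -> 0 < l < 1 ->
    g (l * x + (1 - l) * y) < l * g x + (1 - l) * g y.

(* f : R^+ -> R^+ is represented by f : R -> R; values at x <= 0 are irrelevant.
   Strongly hyperbolic, conditions (0)-(5) of the paper. *)
Definition strongly_hyperbolic (f : R -> R) : Prop :=
  (forall x, 0 < x -> 0 < f x) /\
  filterlim f (at_right 0) (Rbar_locally p_infty) /\
  is_lim f p_infty 0 /\
  strictly_convex_pos f /\
  (forall b : R, is_lim (fun x => f (x + b) / f x) p_infty 1) /\
  (forall x, 0 < x -> ex_derive f x) /\
  strictly_convex_pos (fun x => ln (Rabs (Derive f x))).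

Definition liminf_at_right0_is_minfty (g : R -> R) : Prop :=
  forall (M delta : R), 0 < delta -> exists x, 0 < x < delta /\ g x < M.

(* Tangent lines of the convex f, together with f > 0 and f -> 0 at +oo, give f' < 0 with
   f' nondecreasing, and log-convexity of |f'| makes q_b(x) = f'(x)/f'(x+b) >= 1 strictly
   decreasing.  If q_b stayed above some K > 1, then f(x+b) - f(x)/K would be nondecreasing
   with limit 0, hence nonpositive, so f(x+b)/f(x) <= 1/K, against f(x+b)/f(x) -> 1; thus
   q_b -> 1.  The tangent inequalities at x and x+s squeeze f'(x)/f(x) between
   1 - f(x-1)/f(x) and 0, and (f(x+s) - f(x))/f'(x) between s f'(x+s)/f'(x) and s; the fourth
   limit is a quotient of two instances of the third.  Finally, f'/f >= M near 0+ would make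
   ln f - M x nondecreasing there, so f would stay bounded as x -> 0+. *)

From Stdlib Require Import Reals Lra Classical.
From Coquelicot Require Import Coquelicot.
Open Scope R_scope.

Lemma le_of_is_derive_nonneg (h dh : R -> R) (a b : R) : a <= b ->
  (forall c, a <= c <= b -> is_derive h c (dh c)) ->
  (forall c, a <= c <= b -> 0 <= dh c) -> h a <= h b.
Proof.
  intros Hab Hd Hdh.
  destruct (Req_dec a b) as [<-|Hne]; [lra|].
  destruct (MVT_cor2 h dh a b) as [c [Hc Hac]]; [lra| |].
  - intros c Hc. apply is_derive_Reals, Hd, Hc.
  - assert (0 <= dh c) by (apply Hdh; lra). nra.
Qed.

Lemma is_lim_diff_quot (h : R -> R) (x l : R) :
  is_derive h x l -> is_lim (fun u => (h (x + u) - h x) / u) 0 l.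
Proof.
  intros Hd. apply is_derive_Reals in Hd. apply is_lim_spec. intros eps.
  destruct (Hd eps (cond_pos eps)) as [d Hdelta].
  exists d. intros u Hu Hu0. apply Hdelta; [exact Hu0|].
  change (Rabs (u - 0) < d) in Hu. rewrite Rminus_0_r in Hu. exact Hu.
Qed.

Lemma filter_le_at_right_locally' (x : R) : filter_le (at_right x) (locally' x).
Proof.
  intros P. unfold locally', at_right, within. apply filter_imp.
  intros y Hy Hxy. apply Hy. lra.
Qed.

Lemma is_lim_shift (g : R -> R) (b : R) (l : Rbar) :
  is_lim g p_infty l -> is_lim (fun x => g (x + b)) p_infty l.
Proof.
  apply filterlim_comp. intros P [M HM]. exists (M - b). intros x Hx. apply HM. lra.
Qed.

Lemma is_lim_nonincr (g : R -> R) (a L : R) :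
  (forall x y, a < x -> x <= y -> g y <= g x) ->
  (forall x, a < x -> L <= g x) ->
  (forall K, L < K -> exists x, a < x /\ g x < K) ->
  is_lim g p_infty L.
Proof.
  intros Hmono Hlow Hinf. apply is_lim_spec. intros eps.
  destruct (Hinf (L + eps)) as [x0 [Hx0 Hgx0]]; [pose proof (cond_pos eps); lra|].
  exists x0. intros x Hx.
  pose proof (Hmono x0 x Hx0 (Rlt_le _ _ Hx)). pose proof (Hlow x ltac:(lra)).
  rewrite Rabs_pos_eq; lra.
Qed.

Lemma Rdiv_le_compat_neg (a b c : R) : c < 0 -> b <= a -> a / c <= b / c.
Proof.
  intros Hc Hab. unfold Rdiv. rewrite !(Rmult_comm _ (/ c)).
  apply Rmult_le_compat_neg_l; [left; apply Rinv_neg |]; assumption.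
Qed.

Definition convex_pos (g : R -> R) : Prop :=
  forall x y l : R, 0 < x -> 0 < y -> 0 < l < 1 ->
    g (l * x + (1 - l) * y) <= l * g x + (1 - l) * g y.

Lemma strictly_convex_pos_convex_pos (g : R -> R) :
  strictly_convex_pos g -> convex_pos g.
Proof.
  intros Hg x y l Hx Hy Hl. destruct (Req_dec x y) as [<-|Hne].
  - replace (l * x + (1 - l) * x) with x by ring. right; ring.
  - left. apply Hg; assumption.
Qed.

Lemma convex_pos_tangent (g : R -> R) (x y : R) : convex_pos g -> 0 < x -> 0 < y ->
  ex_derive g x -> g x + Derive g x * (y - x) <= g y.
Proof.
  intros Hg Hx Hy Hd.
  set (phi := fun l => g (x + l * (y - x))).
  assert (Hphi : is_derive phi 0 ((y - x) * Derive g x)).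
  { apply (is_derive_comp g (fun l => x + l * (y - x))).
    - replace (x + 0 * (y - x)) with x by ring. apply Derive_correct, Hd.
    - auto_derive; [exact I | ring]. }
  assert (Hquot : is_lim (fun l => (phi l - g x) / l) 0 ((y - x) * Derive g x)).
  { apply (is_lim_ext (fun l => (phi (0 + l) - phi 0) / l)).
    - intros l. unfold phi. now rewrite Rplus_0_l, Rmult_0_l, Rplus_0_r.
    - apply is_lim_diff_quot, Hphi. }
  assert (Hle : Rbar_le ((y - x) * Derive g x) (g y - g x)).
  { apply (filterlim_le (F := at_right 0) (fun l => (phi l - g x) / l) (fun _ => g y - g x)).
    - exists (mkposreal 1 Rlt_0_1). intros l Hl Hl0.
      change (Rabs (l - 0) < 1) in Hl. rewrite Rminus_0_r, Rabs_pos_eq in Hl by lra.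
      pose proof (Hg y x l Hy Hx (conj Hl0 Hl)) as Hc.
      replace (l * y + (1 - l) * x) with (x + l * (y - x)) in Hc by ring.
      apply Rle_div_l; [exact Hl0|]. unfold phi. lra.
    - apply (filterlim_filter_le_1 _ (filter_le_at_right_locally' 0)), Hquot.
    - apply filterlim_const. }
  simpl in Hle. lra.
Qed.

Lemma strictly_convex_pos_increment (g : R -> R) (x y b : R) :
  strictly_convex_pos g -> 0 < x -> x < y -> 0 < b ->
  g y + g (x + b) < g x + g (y + b).
Proof.
  intros Hg Hx Hxy Hb.
  set (l := b / (y + b - x)).
  assert (Hl : 0 < l < 1).
  { unfold l. split; [apply Rdiv_lt_0_compat; lra|]. apply Rlt_div_l; lra. }
  pose proof (Hg x (y + b) l Hx ltac:(lra) ltac:(lra) Hl) as H1.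
  pose proof (Hg x (y + b) (1 - l) Hx ltac:(lra) ltac:(lra) ltac:(lra)) as H2.
  replace (l * x + (1 - l) * (y + b)) with y in H1 by (unfold l; field; lra).
  replace ((1 - l) * x + (1 - (1 - l)) * (y + b)) with (x + b) in H2
    by (unfold l; field; lra).
  lra.
Qed.

Lemma liminf_Derive_div_at_right0 (g : R -> R) :
  (forall x, 0 < x -> 0 < g x) -> (forall x, 0 < x -> ex_derive g x) ->
  filterlim g (at_right 0) (Rbar_locally p_infty) ->
  liminf_at_right0_is_minfty (fun x => Derive g x / g x).
Proof.
  intros Hpos Hd Hinf M delta Hdelta.
  apply NNPP. intros Hnone.
  set (a := delta / 2).
  assert (Hbound : forall y, 0 < y <= a -> ln (g y) - M * y <= ln (g a) - M * a).
  { intros y Hy.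
    apply (le_of_is_derive_nonneg (fun x => ln (g x) - M * x)
             (fun x => Derive g x / g x - M)); [lra| |].
    - intros c Hc. auto_derive.
      + repeat split; [apply Hd | apply Hpos]; lra.
      + change (Derive (fun x => g x)) with (Derive g). unfold Rdiv. ring.
    - intros c Hc. cut (M <= Derive g c / g c); [lra|]. apply Rnot_lt_le. intros Hlt.
      apply Hnone. exists c. unfold a in Hc. split; [lra | exact Hlt]. }
  set (C := exp (ln (g a) + Rabs M * a)).
  destruct (filter_ex (F := at_right 0) (fun y => 0 < y /\ y <= a /\ C < g y))
    as [y (Hy0 & Hya & HCy)].
  { repeat apply filter_and.
    - exists (mkposreal 1 Rlt_0_1). intros y _ Hy. exact Hy.
    - exists (mkposreal a ltac:(unfold a; lra)). intros y Hy _.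
      change (Rabs (y - 0) < a) in Hy. rewrite Rminus_0_r in Hy.
      pose proof (Rle_abs y). lra.
    - specialize (Hinf (fun u => C < u) (ex_intro _ C (fun u Hu => Hu))). exact Hinf. }
  assert (HlnC : ln C < ln (g y)) by (apply ln_increasing; [apply exp_pos | exact HCy]).
  unfold C in HlnC. rewrite ln_exp in HlnC.
  specialize (Hbound y (conj Hy0 Hya)).
  destruct (Rle_dec 0 M); [rewrite Rabs_pos_eq in HlnC | rewrite Rabs_left in HlnC]; nra.
Qed.

Section StronglyHyperbolic.

Variable f : R -> R.
Hypothesis f_pos : forall x, 0 < x -> 0 < f x.
Hypothesis f_lim : is_lim f p_infty 0.
Hypothesis f_convex : strictly_convex_pos f.
Hypothesis f_shift_ratio : forall b, is_lim (fun x => f (x + b) / f x) p_infty 1.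
Hypothesis f_derivable : forall x, 0 < x -> ex_derive f x.
Hypothesis ln_Derive_convex : strictly_convex_pos (fun x => ln (Rabs (Derive f x))).

Lemma tangent_le x y : 0 < x -> 0 < y -> f x + Derive f x * (y - x) <= f y.
Proof.
  intros Hx Hy. apply convex_pos_tangent; auto using strictly_convex_pos_convex_pos.
Qed.

Lemma Derive_neg x : 0 < x -> Derive f x < 0.
Proof.
  intros Hx. apply Rnot_le_lt. intros HD.
  assert (Hle : Rbar_le (f x) 0).
  { apply (is_lim_le_loc (fun _ => f x) f p_infty); [| apply is_lim_const | exact f_lim].
    exists x. intros y Hy. pose proof (tangent_le x y Hx ltac:(lra)). nra. }
  simpl in Hle. pose proof (f_pos x Hx). lra.
Qed.

Lemma Derive_ratio_ge1 b x : 0 < b -> 0 < x -> 1 <= Derive f x / Derive f (x + b).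
Proof.
  intros Hb Hx.
  pose proof (tangent_le x (x + b) Hx ltac:(lra)).
  pose proof (tangent_le (x + b) x ltac:(lra) Hx).
  pose proof (Derive_neg (x + b) ltac:(lra)).
  replace 1 with (Derive f (x + b) / Derive f (x + b)) by (field; lra).
  apply Rdiv_le_compat_neg; nra.
Qed.

Lemma Derive_ratio_decr b x y : 0 < b -> 0 < x -> x < y ->
  Derive f y / Derive f (y + b) < Derive f x / Derive f (x + b).
Proof.
  intros Hb Hx Hxy.
  pose proof (strictly_convex_pos_increment _ x y b ln_Derive_convex Hx Hxy Hb) as Hinc.
  pose proof (Derive_neg x Hx). pose proof (Derive_neg y ltac:(lra)).
  pose proof (Derive_neg (x + b) ltac:(lra)). pose proof (Derive_neg (y + b) ltac:(lra)).
  simpl in Hinc. rewrite !Rabs_left in Hinc by lra.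
  rewrite <- !ln_mult in Hinc by lra.
  apply ln_lt_inv in Hinc; [| nra | nra].
  apply Rlt_0_minus.
  replace (Derive f x / Derive f (x + b) - Derive f y / Derive f (y + b)) with
    ((Derive f x * Derive f (y + b) - Derive f y * Derive f (x + b))
     / (Derive f (x + b) * Derive f (y + b))) by (field; lra).
  apply Rdiv_lt_0_compat; nra.
Qed.

Lemma shift_sub_scaled_nondecr b K : 0 < b -> 0 < K ->
  (forall z, 0 < z -> K <= Derive f z / Derive f (z + b)) ->
  forall y z, 0 < y -> y <= z -> f (y + b) - f y / K <= f (z + b) - f z / K.
Proof.
  intros Hb HK HqK y z Hy Hyz.
  apply (le_of_is_derive_nonneg (fun z => f (z + b) - f z / K)
           (fun z => Derive f (z + b) - Derive f z / K)); [lra| |].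
  - intros c Hc. auto_derive.
    + split; [apply f_derivable; lra|]. split; [apply f_derivable; lra | exact I].
    + change (Derive (fun x => f x)) with (Derive f). unfold Rdiv. ring.
  - intros c Hc. specialize (HqK c ltac:(lra)).
    pose proof (Derive_neg (c + b) ltac:(lra)).
    replace (Derive f c / Derive f (c + b)) with (- Derive f c / - Derive f (c + b))
      in HqK by (field; lra).
    apply Rle_div_r in HqK; [|lra].
    cut (Derive f c / K <= Derive f (c + b)); [lra|].
    apply Rle_div_l; lra.
Qed.

Lemma Derive_ratio_below b K : 0 < b -> 1 < K ->
  exists y, 0 < y /\ Derive f y / Derive f (y + b) < K.
Proof.
  intros Hb HK. apply NNPP. intros Hnone.
  set (h := fun z => f (z + b) - f z / K).
  assert (Hh_mono : forall y z, 0 < y -> y <= z -> h y <= h z).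
  { apply shift_sub_scaled_nondecr; [lra | lra |].
    intros z Hz. apply Rnot_lt_le. intros Hlt. apply Hnone. exists z. auto. }
  assert (Hh_lim : is_lim h p_infty 0).
  { pose proof (is_lim_scal_l f (/ K) p_infty 0 f_lim) as Hscal. simpl in Hscal.
    apply (is_lim_ext (fun z => f (z + b) - / K * f z)).
    { intros z. unfold h, Rdiv. ring. }
    replace (Finite 0) with (Finite (0 - / K * 0)) by (f_equal; ring).
    apply is_lim_minus'; [apply is_lim_shift, f_lim | exact Hscal]. }
  assert (Hh_nonpos : forall y, 0 < y -> h y <= 0).
  { intros y Hy.
    apply (is_lim_le_loc (fun _ => h y) h p_infty (h y) 0);
      [| apply is_lim_const | exact Hh_lim].
    exists y. intros z Hz. apply Hh_mono; lra. }
  assert (Hrat : Rbar_le 1 (/ K)).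
  { apply (is_lim_le_loc (fun x => f (x + b) / f x) (fun _ => / K) p_infty);
      [| apply f_shift_ratio | apply is_lim_const].
    exists 0. intros x Hx. specialize (Hh_nonpos x Hx). unfold h in Hh_nonpos.
    pose proof (f_pos x Hx). apply Rle_div_l; [lra|]. unfold Rdiv in Hh_nonpos. lra. }
  simpl in Hrat. apply Rinv_lt_contravar in HK; [|lra]. rewrite Rinv_1 in HK. lra.
Qed.

Lemma is_lim_Derive_ratio b : 0 < b ->
  is_lim (fun x => Derive f x / Derive f (x + b)) p_infty 1.
Proof.
  intros Hb. apply (is_lim_nonincr _ 0).
  - intros x y Hx Hxy. destruct (Req_dec x y) as [<-|Hne]; [lra|].
    left. apply Derive_ratio_decr; lra.
  - intros x Hx. apply Derive_ratio_ge1; assumption.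
  - intros K HK. apply Derive_ratio_below; assumption.
Qed.

Lemma is_lim_Derive_shift_ratio s :
  is_lim (fun x => Derive f (x + s) / Derive f x) p_infty 1.
Proof.
  destruct (Rtotal_order s 0) as [Hs|[->|Hs]].
  - apply (is_lim_ext (fun x => Derive f (x + s) / Derive f (x + s + - s))).
    { intros x. now replace (x + s + - s) with x by ring. }
    apply (is_lim_shift (fun x => Derive f x / Derive f (x + - s))).
    apply is_lim_Derive_ratio. lra.
  - apply (is_lim_ext_loc (fun _ => 1)); [| apply is_lim_const].
    exists 0. intros x Hx. rewrite Rplus_0_r.
    pose proof (Derive_neg x Hx). field. lra.
  - apply (is_lim_ext (fun x => / (Derive f x / Derive f (x + s)))).
    { intros x. apply Rinv_div. }
    replace (Finite 1) with (Rbar_inv 1) by (simpl; f_equal; apply Rinv_1).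
    apply is_lim_inv; [apply is_lim_Derive_ratio; exact Hs |].
    intros E. apply R1_neq_R0. now injection E.
Qed.

Lemma is_lim_Derive_div : is_lim (fun x => Derive f x / f x) p_infty 0.
Proof.
  apply (is_lim_le_le_loc (fun x => 1 - f (x + -1) / f x) (fun _ => 0)).
  - exists 1. intros x Hx.
    pose proof (tangent_le x (x + -1) ltac:(lra) ltac:(lra)).
    pose proof (f_pos x ltac:(lra)). pose proof (Derive_neg x ltac:(lra)).
    split.
    + replace (1 - f (x + -1) / f x) with ((f x - f (x + -1)) / f x) by (field; lra).
      apply Rmult_le_compat_r; [left; apply Rinv_0_lt_compat |]; lra.
    + left. apply Rdiv_neg_pos; lra.
  - replace (Finite 0) with (Finite (1 - 1)) by (f_equal; ring).
    apply is_lim_minus'; [apply is_lim_const | apply f_shift_ratio].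
  - apply is_lim_const.
Qed.

Lemma is_lim_increment_div_Derive s :
  is_lim (fun x => (f (x + s) - f x) / Derive f x) p_infty s.
Proof.
  apply (is_lim_le_le_loc (fun x => s * (Derive f (x + s) / Derive f x)) (fun _ => s)).
  - exists (Rabs s). intros x Hx.
    assert (0 < x /\ 0 < x + s) as [Hx0 Hxs].
    { pose proof (Rle_abs s). pose proof (Rle_abs (- s)). rewrite Rabs_Ropp in *. lra. }
    pose proof (tangent_le x (x + s) Hx0 Hxs).
    pose proof (tangent_le (x + s) x Hxs Hx0).
    pose proof (Derive_neg x Hx0).
    split.
    + replace (s * (Derive f (x + s) / Derive f x))
        with (s * Derive f (x + s) / Derive f x) by (unfold Rdiv; ring).
      apply Rdiv_le_compat_neg; lra.
    + replace s with (s * Derive f x / Derive f x) at 2 by (field; lra).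
      apply Rdiv_le_compat_neg; lra.
  - pose proof (is_lim_scal_l _ s p_infty 1 (is_lim_Derive_shift_ratio s)) as Hscal.
    simpl in Hscal. rewrite Rmult_1_r in Hscal. exact Hscal.
  - apply is_lim_const.
Qed.

Lemma is_lim_increment_ratio s t : t <> 0 ->
  is_lim (fun x => (f (x + s) - f x) / (f (x + t) - f x)) p_infty (s / t).
Proof.
  intros Ht.
  apply (is_lim_ext_loc
           (fun x => ((f (x + s) - f x) / Derive f x) / ((f (x + t) - f x) / Derive f x))).
  - exists 0. intros x Hx. pose proof (Derive_neg x Hx).
    unfold Rdiv. rewrite Rinv_mult, Rinv_inv.
    replace ((f (x + s) - f x) * / Derive f x * (/ (f (x + t) - f x) * Derive f x))
      with ((f (x + s) - f x) * / (f (x + t) - f x) * (Derive f x * / Derive f x)) by ring.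
    rewrite Rinv_r by lra. ring.
  - apply (is_lim_div _ _ p_infty s t);
      [apply is_lim_increment_div_Derive .. | congruence | exact I].
Qed.

End StronglyHyperbolic.

Theorem lemma3p2 (f : R -> R) (b s t : R) :
  strongly_hyperbolic f -> 0 < b -> s <> 0 -> t <> 0 ->
  is_lim (fun x => Derive f x / Derive f (x + b)) p_infty 1 /\
  is_lim (fun x => Derive f x / f x) p_infty 0 /\
  is_lim (fun x => (f (x + s) - f x) / Derive f x) p_infty s /\
  is_lim (fun x => (f (x + s) - f x) / (f (x + t) - f x)) p_infty (s / t) /\
  liminf_at_right0_is_minfty (fun x => Derive f x / f x).
Proof.
  intros (f_pos & f_inf & f_lim & f_convex & f_ratio & f_der & lnD_convex) Hb _ Ht.
  repeat split.
  - apply is_lim_Derive_ratio; assumption.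
  - apply is_lim_Derive_div; assumption.
  - apply is_lim_increment_div_Derive; assumption.
  - apply is_lim_increment_ratio; assumption.
  - apply liminf_Derive_div_at_right0; assumption.
Qed.
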